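(* Let $G$, $\mathcal Q_\delta$, $\mathcal T_{\mathcal X}$ and BQ-CADMM be as in the context, with arbitrary $a\in\mathbb R$, $\Delta>0$, $\delta\in(0,\Delta)$, $\rho>0$ and arbitrary data $r_1,\dots,r_n\in\mathbb R$. Let $\bar r=\frac1n\sum_{i=1}^n r_i$. Then there exists a finite $k_0$ such that for all $k\ge k_0$ exactly one of the following holds: (i) (convergence) $\mathcal Q_\delta(x_1^k)=\mathcal Q_\delta(x_2^k)=\cdots=\mathcal Q_\delta(x_n^k)=x_Q^*$ for a common value $x_Q^*\in\{a,a+\Delta\}$ independent of $k$, and $$|x_Q^*-\mathcal T_{\mathcal X}(\bar r)|\le \Big(1+4\rho\tfrac{m}{n}\Big)(\Delta-\delta)\ \text{ if } x_Q^*=a,\qquad |x_Q^*-\mathcal T_{\mathcal X}(\bar r)|<\Big(1+4\rho\tfrac{m}{n}\Big)\delta\ \text{ if } x_Q^*=a+\Delta;$$ (ii) (cycling) there is a finite period $T\ge2$ with $x_i^k=x_i^{k+T}$ for all $i=1,\dots,n$, such that $$\sum_{l=0}^{T-1}\mathcal Q_\delta(x_1^{k+l})=\sum_{l=0}^{T-1}\mathcal Q_\delta(x_2^{k+l})=\cdots=\sum_{l=0}^{T-1}\mathcal Q_\delta(x_n^{k+l}),$$ and moreover $|\bar r-(a+\Delta-\delta)|<6\rho n\Delta$.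
   Context: Let $G$ be a connected undirected simple graph on nodes $\{1,\dots,n\}$, $n\ge2$, with $m$ edges; $\mathcal N_i$ is the set of neighbors of node $i$ (with $i\notin\mathcal N_i$), so $\sum_i|\mathcal N_i|=2m$. Given $a\in\mathbb R$, $\Delta>0$ and $\delta\in(0,\Delta)$, the $\delta$-quantizer is $\mathcal Q_\delta(x)=a$ if $x\le a+\Delta-\delta$ and $\mathcal Q_\delta(x)=a+\Delta$ otherwise; $\mathcal X=[a,a+\Delta]$ and $\mathcal T_{\mathcal X}:\mathbb R\to\mathcal X$ is the projection onto $\mathcal X$ (nearest point). Given local data $r_1,\dots,r_n\in\mathbb R$ and a parameter $\rho>0$, BQ-CADMM is the deterministic iteration with $x_i^0=0$, $\alpha_i^0=0$ for all $i$ and, for $k\ge0$, $$x_i^{k+1}=\frac{1}{1+2\rho|\mathcal N_i|}\Big(\rho|\mathcal N_i|\mathcal Q_\delta(x_i^k)+\rho\sum_{j\in\mathcal N_i}\mathcal Q_\delta(x_j^k)-\alpha_i^k+r_i\Big),$$ $$\alpha_i^{k+1}=\alpha_i^k+\rho\Big(|\mathcal N_i|\mathcal Q_\delta(x_i^{k+1})-\sum_{j\in\mathcal N_i}\mathcal Q_\delta(x_j^{k+1})\Big).$$ *)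

From Stdlib Require Import Reals Lra Lia Arith List Relations.
Import ListNotations.
Open Scope R_scope.

(* Nodes are 0..n-1 (the paper's 1..n shifted by one). *)
Definition nodes (n : nat) : list nat := seq 0 n.

Definition sumR (l : list nat) (f : nat -> R) : R :=
  fold_right (fun i acc => f i + acc) 0 l.

Definition simple_graph (n : nat) (adj : nat -> nat -> bool) : Prop :=
  (forall i j, adj i j = adj j i) /\
  (forall i, adj i i = false) /\
  (forall i j, adj i j = true -> (i < n)%nat /\ (j < n)%nat).

Definition edge_rel (n : nat) (adj : nat -> nat -> bool) : relation nat :=
  fun i j => adj i j = true.

Definition connected (n : nat) (adj : nat -> nat -> bool) : Prop :=
  forall i j, (i < n)%nat -> (j < n)%nat -> clos_refl_trans nat (edge_rel n adj) i j.

Definition nbrs (n : nat) (adj : nat -> nat -> bool) (i : nat) : list nat :=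
  filter (adj i) (nodes n).

Definition deg (n : nat) (adj : nat -> nat -> bool) (i : nat) : nat :=
  length (nbrs n adj i).

Definition num_edges (n : nat) (adj : nat -> nat -> bool) : nat :=
  fold_right Nat.add 0%nat
    (map (fun i => length (filter (fun j => andb (Nat.ltb i j) (adj i j)) (nodes n))) (nodes n)).

Definition Qd (a Delta delta x : R) : R :=
  if Rle_dec x (a + Delta - delta) then a else a + Delta.

Definition projX (a Delta x : R) : R := Rmax a (Rmin x (a + Delta)).

Definition bq_step (n : nat) (adj : nat -> nat -> bool) (a Delta delta rho : R)
  (r : nat -> R) (st : (nat -> R) * (nat -> R)) : (nat -> R) * (nat -> R) :=
  let (x, al) := st in
  let Q := Qd a Delta delta in
  let x' := fun i =>
    (rho * INR (deg n adj i) * Q (x i) + rho * sumR (nbrs n adj i) (fun j => Q (x j))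
       - al i + r i) / (1 + 2 * rho * INR (deg n adj i)) in
  let al' := fun i =>
    al i + rho * (INR (deg n adj i) * Q (x' i) - sumR (nbrs n adj i) (fun j => Q (x' j))) in
  (x', al').

Fixpoint bq_state (n : nat) (adj : nat -> nat -> bool) (a Delta delta rho : R)
  (r : nat -> R) (k : nat) : (nat -> R) * (nat -> R) :=
  match k with
  | O => (fun _ => 0, fun _ => 0)
  | S k' => bq_step n adj a Delta delta rho r (bq_state n adj a Delta delta rho r k')
  end.

Definition bq_x n adj a Delta delta rho r (k i : nat) : R :=
  fst (bq_state n adj a Delta delta rho r k) i.

Definition bq_alpha n adj a Delta delta rho r (k i : nat) : R :=
  snd (bq_state n adj a Delta delta rho r k) i.

Definition rbar (n : nat) (r : nat -> R) : R := sumR (nodes n) r / INR n.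

Definition periodic_from n adj a Delta delta rho r (k0 T : nat) : Prop :=
  forall k i, (k0 <= k)%nat -> (i < n)%nat ->
    bq_x n adj a Delta delta rho r (k + T) i = bq_x n adj a Delta delta rho r k i.

Definition converges_alt n adj a Delta delta rho r (k0 : nat) : Prop :=
  exists xQ : R,
    (xQ = a \/ xQ = a + Delta) /\
    (forall k i, (k0 <= k)%nat -> (i < n)%nat ->
       Qd a Delta delta (bq_x n adj a Delta delta rho r k i) = xQ) /\
    (xQ = a -> Rabs (xQ - projX a Delta (rbar n r))
                <= (1 + 4 * rho * INR (num_edges n adj) / INR n) * (Delta - delta)) /\
    (xQ = a + Delta -> Rabs (xQ - projX a Delta (rbar n r))
                < (1 + 4 * rho * INR (num_edges n adj) / INR n) * delta).

Definition cycles_alt n adj a Delta delta rho r (k0 : nat) : Prop :=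
  exists T : nat,
    (2 <= T)%nat /\
    periodic_from n adj a Delta delta rho r k0 T /\
    (forall T', (1 <= T')%nat -> (T' < T)%nat -> ~ periodic_from n adj a Delta delta rho r k0 T') /\
    (forall k i j, (k0 <= k)%nat -> (i < n)%nat -> (j < n)%nat ->
       sumR (seq 0 T) (fun l => Qd a Delta delta (bq_x n adj a Delta delta rho r (k + l) i))
       = sumR (seq 0 T) (fun l => Qd a Delta delta (bq_x n adj a Delta delta rho r (k + l) j))) /\
    Rabs (rbar n r - (a + Delta - delta)) < 6 * rho * INR n * Delta.

From Stdlib Require Import Reals Lra Lia Arith List Relations Classical ZArith.
Import ListNotations.
Open Scope R_scope.

(* Each alpha_i^k lies in rho*Delta*Z, since its increments are rho times sums of differences of
   quantized values, and it stays bounded: once alpha_i is large, the next x_i falls below the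
   threshold s = a + Delta - delta and alpha_i stops growing (symmetrically from below).  The pair
   (Q(x^k), alpha^k) thus ranges over a finite set and determines x^(k+1), so the iteration is
   eventually periodic.  Summing the alpha-update over a period shows that the per-period sums of
   Q(x_i) form a harmonic function on the connected graph, hence do not depend on i.  Since the
   alpha_i sum to zero, sum_i (1 + 2 rho d_i) (x_i^(k+1) - s) = 2 rho sum_i d_i (Q(x_i^k) - s)
   + n (rbar - s).  If the quantized values eventually agree, this identity places rbar relative to
   s.  Otherwise the minimal period is at least 2, every node crosses the threshold within a
   period, and after a crossing (1 + 2 rho d_i) |x_i - s| <= 3 rho d_i Delta; the identity then
   gives |rbar - s| <= 5 rho n Delta. *)

Lemma sumR_nil f : sumR [] f = 0.
Proof. reflexivity. Qed.

Lemma sumR_cons i l f : sumR (i :: l) f = f i + sumR l f.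
Proof. reflexivity. Qed.

Lemma sumR_app l1 l2 f : sumR (l1 ++ l2) f = sumR l1 f + sumR l2 f.
Proof.
  induction l1 as [|i l1 IH]; simpl app; rewrite ?sumR_nil, ?sumR_cons, ?IH; lra.
Qed.

Lemma sumR_ext_in l f g : (forall j, In j l -> f j = g j) -> sumR l f = sumR l g.
Proof.
  induction l as [|i l IH]; intros H; rewrite ?sumR_nil, ?sumR_cons; auto.
  rewrite (H i), IH; [reflexivity| |left; reflexivity].
  intros j Hj; apply H; right; exact Hj.
Qed.

Lemma sumR_plus l f g : sumR l (fun i => f i + g i) = sumR l f + sumR l g.
Proof. induction l as [|i l IH]; rewrite ?sumR_nil, ?sumR_cons, ?IH; lra. Qed.

Lemma sumR_minus l f g : sumR l (fun i => f i - g i) = sumR l f - sumR l g.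
Proof. induction l as [|i l IH]; rewrite ?sumR_nil, ?sumR_cons, ?IH; lra. Qed.

Lemma sumR_scal l c f : sumR l (fun i => c * f i) = c * sumR l f.
Proof. induction l as [|i l IH]; rewrite ?sumR_nil, ?sumR_cons, ?IH; lra. Qed.

Lemma sumR_const l c : sumR l (fun _ => c) = INR (length l) * c.
Proof.
  induction l as [|i l IH]; rewrite ?sumR_nil, ?sumR_cons, ?IH; simpl length;
    rewrite ?S_INR; simpl; lra.
Qed.

Lemma sumR_le l f g : (forall j, In j l -> f j <= g j) -> sumR l f <= sumR l g.
Proof.
  induction l as [|i l IH]; intros H; rewrite ?sumR_nil, ?sumR_cons; [lra|].
  assert (f i <= g i) by (apply H; simpl; auto).
  assert (sumR l f <= sumR l g) by (apply IH; intros; apply H; simpl; auto).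
  lra.
Qed.

Lemma sumR_lt l f g : l <> [] -> (forall j, In j l -> f j < g j) -> sumR l f < sumR l g.
Proof.
  destruct l as [|i l]; intros Hl H; [congruence|]. rewrite !sumR_cons.
  assert (f i < g i) by (apply H; simpl; auto).
  assert (sumR l f <= sumR l g) by (apply sumR_le; intros; left; apply H; simpl; auto).
  lra.
Qed.


Lemma sumR_filter p l f : sumR (filter p l) f = sumR l (fun j => if p j then f j else 0).
Proof.
  induction l as [|i l IH]; simpl filter; auto.
  rewrite (sumR_cons i l). destruct (p i); rewrite ?sumR_cons, IH; lra.
Qed.

Lemma sumR_exchange l1 l2 (F : nat -> nat -> R) :
  sumR l1 (fun i => sumR l2 (fun j => F i j)) = sumR l2 (fun j => sumR l1 (fun i => F i j)).
Proof.
  induction l1 as [|i l1 IH]; rewrite ?sumR_nil, ?sumR_cons.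
  - rewrite (sumR_ext_in l2 _ (fun _ => 0)) by (intros; apply sumR_nil).
    rewrite sumR_const. ring.
  - rewrite IH, <- sumR_plus. apply sumR_ext_in; intros j _; rewrite sumR_cons; reflexivity.
Qed.

Lemma sumR_telescope (h : nat -> R) p : sumR (seq 0 p) (fun m => h (S m) - h m) = h p - h 0%nat.
Proof.
  induction p as [|p IH]; [rewrite sumR_nil; lra|].
  rewrite seq_S, sumR_app, IH, sumR_cons, sumR_nil; simpl. lra.
Qed.

Lemma sumR_eq_max l f M :
  (forall j, In j l -> f j <= M) -> sumR l f = INR (length l) * M -> forall j, In j l -> f j = M.
Proof.
  intros Hle Hsum j Hj. apply Rle_antisym; [auto|].
  destruct (in_split j l Hj) as (l1 & l2 & ->).
  rewrite sumR_app, sumR_cons, length_app in Hsum. simpl length in Hsum.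
  rewrite plus_INR, S_INR in Hsum.
  assert (sumR l1 f <= INR (length l1) * M).
  { rewrite <- sumR_const. apply sumR_le; intros; apply Hle, in_or_app; auto. }
  assert (sumR l2 f <= INR (length l2) * M).
  { rewrite <- sumR_const. apply sumR_le; intros; apply Hle, in_or_app; simpl; auto. }
  lra.
Qed.

Lemma sumR_eq_min l f M :
  (forall j, In j l -> M <= f j) -> sumR l f = INR (length l) * M -> forall j, In j l -> f j = M.
Proof.
  intros Hle Hsum j Hj.
  enough (- f j = - M) by lra.
  apply (sumR_eq_max l (fun j => - f j)); auto.
  - intros i Hi. specialize (Hle i Hi). lra.
  - rewrite <- (Rmult_1_l (sumR l (fun j => - f j))).
    replace (sumR l (fun j => - f j)) with (-1 * sumR l f).
    + rewrite Hsum; ring.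
    + rewrite <- sumR_scal. apply sumR_ext_in; intros; ring.
Qed.

Lemma sumR_multiples l f c :
  (forall j, In j l -> exists z, f j = c * IZR z) -> exists z, sumR l f = c * IZR z.
Proof.
  induction l as [|i l IH]; intros H.
  - exists 0%Z. rewrite sumR_nil. lra.
  - destruct (H i) as [z1 E1]; [left; reflexivity|].
    destruct IH as [z2 E2]; [intros; apply H; right; auto|].
    exists (z1 + z2)%Z. rewrite sumR_cons, E1, E2, plus_IZR. ring.
Qed.

Lemma INR_length_filter p l : INR (length (filter p l)) = sumR l (fun j => if p j then 1 else 0).
Proof. rewrite <- sumR_filter, sumR_const. ring. Qed.

Lemma INR_sum_nat (h : nat -> nat) l :
  INR (fold_right Nat.add 0%nat (map h l)) = sumR l (fun i => INR (h i)).
Proof. induction l as [|i l IH]; simpl; auto. rewrite plus_INR, IH. reflexivity. Qed.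

Lemma pigeonhole {A} (L : list A) (f : nat -> A) :
  (forall k, In (f k) L) -> exists i j, (i < j)%nat /\ f i = f j.
Proof.
  intros HL. apply NNPP; intros Hno.
  assert (Hnd : NoDup (map f (seq 0 (S (length L))))).
  { apply NoDup_map_NoDup_ForallPairs; [|apply seq_NoDup].
    intros i j _ _ E. destruct (Nat.lt_total i j) as [Hij|[Hij|Hij]]; auto;
      exfalso; apply Hno; eauto. }
  apply NoDup_incl_length with (l' := L) in Hnd.
  - rewrite length_map, length_seq in Hnd. lia.
  - intros y Hy. apply in_map_iff in Hy as (k & <- & _). auto.
Qed.

Lemma eventually_periodic_of_finite {A} (L : list A) (f : nat -> A) :
  (forall k, In (f k) L) -> (forall i j, f i = f j -> f (S i) = f (S j)) ->
  exists k0 T, (1 <= T)%nat /\ forall k, (k0 <= k)%nat -> f (k + T)%nat = f k.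
Proof.
  intros HL Hdet. destruct (pigeonhole L f HL) as (i & j & Hij & E).
  assert (Hshift : forall t, f (i + t)%nat = f (j + t)%nat).
  { induction t as [|t IH]; [rewrite !Nat.add_0_r; exact E|].
    rewrite !Nat.add_succ_r. auto. }
  exists i, (j - i)%nat. split; [lia|]. intros k Hk.
  replace (k + (j - i))%nat with (j + (k - i))%nat by lia.
  replace k with (i + (k - i))%nat at 2 by lia. symmetry. apply Hshift.
Qed.

Lemma in_list_power_graph {A B} (l : list A) (l' : list B) (g : A -> B) :
  (forall i, In i l -> In (g i) l') -> In (map (fun i => (i, g i)) l) (list_power l l').
Proof.
  induction l as [|i l IH]; intros H; simpl; [auto|].
  apply in_flat_map. exists (map (fun i => (i, g i)) l). split.
  - apply IH. intros j Hj. apply H. right. exact Hj.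
  - apply (in_map (fun y => (i, y) :: map (fun i => (i, g i)) l)). apply H. left. reflexivity.
Qed.

Lemma bounded_multiples_finite (c M : R) : 0 < c ->
  exists L, forall z, Rabs (c * IZR z) <= M -> In (c * IZR z) L.
Proof.
  intros Hc. set (N := up (M / c)).
  exists (map (fun m => c * IZR (Z.of_nat m - N)) (seq 0 (Z.to_nat (2 * N + 1)))).
  intros z Hz.
  assert (Hzn : (Z.abs z < N)%Z).
  { apply lt_IZR. rewrite <- Rabs_Zabs. destruct (archimed (M / c)) as [HN _].
    apply Rle_lt_trans with (M / c); [|exact HN].
    apply (Rmult_le_reg_l c); [exact Hc|].
    rewrite Rabs_mult, (Rabs_pos_eq c) in Hz by lra.
    replace (c * (M / c)) with M by (field; lra). exact Hz. }
  apply in_map_iff. exists (Z.to_nat (z + N)). split.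
  - do 2 f_equal. lia.
  - apply in_seq. lia.
Qed.

Lemma uniform_bound_below (f : nat -> nat -> R) N :
  (forall i, (i < N)%nat -> exists M, forall k, Rabs (f k i) <= M) ->
  exists M, forall k i, (i < N)%nat -> Rabs (f k i) <= M.
Proof.
  induction N as [|N IH]; intros H.
  - exists 0. intros; lia.
  - destruct IH as [M1 H1]; [intros; apply H; lia|].
    destruct (H N) as [M2 H2]; [lia|].
    exists (Rmax M1 M2). intros k i Hi. destruct (Nat.eq_dec i N) as [->|Hne].
    + eapply Rle_trans; [apply H2|apply Rmax_r].
    + eapply Rle_trans; [apply H1; lia|apply Rmax_l].
Qed.

Lemma confined_of_steps (u : nat -> R) lo hi :
  (forall k, Rmin (u k) lo <= u (S k) <= Rmax (u k) hi) ->
  forall k, Rmin (u 0%nat) lo <= u k <= Rmax (u 0%nat) hi.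
Proof.
  intros H k. induction k as [|k IH]; [split; [apply Rmin_l|apply Rmax_l]|].
  specialize (H k). revert H IH. unfold Rmin, Rmax. repeat destruct Rle_dec; lra.
Qed.

Lemma ge_after_single_drop (u : nat -> R) c t0 k :
  (t0 < k)%nat -> u t0 - c <= u (S t0) ->
  (forall t, (S t0 <= t < k)%nat -> u t <= u (S t)) -> u t0 - c <= u k.
Proof.
  intros Hk Hdrop Hmono. induction k as [|k IH]; [lia|].
  destruct (Nat.eq_dec k t0) as [->|Hne]; [exact Hdrop|].
  apply Rle_trans with (u k).
  - apply IH; [lia|]. intros; apply Hmono; lia.
  - apply Hmono; lia.
Qed.

Lemma last_occurrence (P : nat -> Prop) t0 k :
  (t0 <= k)%nat -> P t0 ->
  exists u, (t0 <= u <= k)%nat /\ P u /\ forall t, (u < t <= k)%nat -> ~ P t.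
Proof.
  intros Hk HP. induction k as [|k IH].
  - exists t0. split; [lia|]. split; [exact HP|]. intros; lia.
  - destruct (classic (P (S k))) as [HS|HS].
    + exists (S k). split; [lia|]. split; [exact HS|]. intros; lia.
    + assert (Hk' : (t0 <= k)%nat) by (destruct (Nat.eq_dec t0 (S k)); [subst; contradiction|lia]).
      destruct (IH Hk') as (u & Hu & HPu & Hafter).
      exists u. split; [lia|]. split; [exact HPu|].
      intros t Ht. destruct (Nat.eq_dec t (S k)) as [->|]; [exact HS|]. apply Hafter; lia.
Qed.

Lemma exists_argmax (f : nat -> R) N :
  (1 <= N)%nat -> exists u, (u < N)%nat /\ forall i, (i < N)%nat -> f i <= f u.
Proof.
  induction N as [|N IH]; intros HN; [lia|].
  destruct (Nat.eq_dec N 0) as [->|HN0].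
  { exists 0%nat. split; [lia|]. intros i Hi. replace i with 0%nat by lia. lra. }
  destruct IH as (u & Hu & Hmax); [lia|].
  destruct (Rle_dec (f N) (f u)).
  - exists u. split; [lia|]. intros i Hi.
    destruct (Nat.eq_dec i N) as [->|]; [assumption|apply Hmax; lia].
  - exists N. split; [lia|]. intros i Hi.
    destruct (Nat.eq_dec i N) as [->|]; [lra|]. specialize (Hmax i ltac:(lia)). lra.
Qed.

Section Graph.
Variables (n : nat) (adj : nat -> nat -> bool).
Hypothesis Hg : simple_graph n adj.

Lemma in_nodes i : In i (nodes n) <-> (i < n)%nat.
Proof. unfold nodes. rewrite in_seq. lia. Qed.

Lemma in_nbrs i j : In j (nbrs n adj i) <-> (j < n)%nat /\ adj i j = true.
Proof. unfold nbrs. rewrite filter_In, in_nodes. reflexivity. Qed.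

Lemma deg_le i : INR (deg n adj i) <= INR n.
Proof.
  apply le_INR. unfold deg, nbrs, nodes.
  rewrite <- (length_seq n 0) at 2. apply filter_length_le.
Qed.

Lemma sumR_nbrs_const i c : sumR (nbrs n adj i) (fun _ => c) = INR (deg n adj i) * c.
Proof. apply sumR_const. Qed.

Lemma INR_deg i : INR (deg n adj i) = sumR (nodes n) (fun j => if adj i j then 1 else 0).
Proof. apply INR_length_filter. Qed.

Lemma sumR_nbrs_double_count g :
  sumR (nodes n) (fun i => sumR (nbrs n adj i) g)
  = sumR (nodes n) (fun j => INR (deg n adj j) * g j).
Proof.
  destruct Hg as [Hsym _].
  rewrite (sumR_ext_in _ _ (fun i => sumR (nodes n) (fun j => if adj i j then g j else 0)))
    by (intros; apply sumR_filter).
  rewrite sumR_exchange. apply sumR_ext_in; intros j _.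
  rewrite INR_deg, Rmult_comm, <- sumR_scal. apply sumR_ext_in; intros i _.
  rewrite (Hsym i j). destruct (adj j i); ring.
Qed.

Lemma sum_deg : sumR (nodes n) (fun i => INR (deg n adj i)) = 2 * INR (num_edges n adj).
Proof.
  destruct Hg as [Hsym [Hirr _]].
  set (E := fun i j => if (Nat.ltb i j && adj i j)%bool then 1 else 0).
  assert (Hsplit : forall i j, (if adj i j then 1 else 0) = E i j + E j i).
  { intros i j. unfold E. rewrite (Hsym j i).
    destruct (Nat.ltb_spec i j), (Nat.ltb_spec j i); simpl; try lia.
    - destruct (adj i j); lra.
    - destruct (adj i j); lra.
    - replace j with i by lia. rewrite Hirr. lra. }
  assert (Hedges : INR (num_edges n adj)
                   = sumR (nodes n) (fun i => sumR (nodes n) (fun j => E i j))).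
  { unfold num_edges. rewrite INR_sum_nat.
    apply sumR_ext_in; intros i _. apply INR_length_filter. }
  rewrite Hedges, (sumR_ext_in _ _ (fun i => sumR (nodes n) (fun j => E i j)
                                             + sumR (nodes n) (fun j => E j i))).
  - rewrite sumR_plus, (sumR_exchange _ _ (fun i j => E j i)). ring.
  - intros i _. rewrite INR_deg, <- sumR_plus. apply sumR_ext_in; intros j _. apply Hsplit.
Qed.

Lemma num_edges_le : 2 * INR (num_edges n adj) <= INR n * INR n.
Proof.
  rewrite <- sum_deg.
  replace (INR n * INR n) with (INR (length (nodes n)) * INR n)
    by (unfold nodes; rewrite length_seq; reflexivity).
  rewrite <- sumR_const. apply sumR_le; intros; apply deg_le.
Qed.

Hypothesis Hc : connected n adj.

Lemma harmonic_const (f : nat -> R) :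
  (1 <= n)%nat ->
  (forall i, (i < n)%nat -> INR (deg n adj i) * f i = sumR (nbrs n adj i) f) ->
  forall i j, (i < n)%nat -> (j < n)%nat -> f i = f j.
Proof.
  intros Hn Hharm. destruct (exists_argmax f n Hn) as (u & Hu & Hmax).
  assert (Hedge : forall i j, adj i j = true -> f i = f u -> f j = f u).
  { intros i j Hij Hi. destruct Hg as (_ & _ & Hbound). destruct (Hbound i j Hij) as [Hin Hjn].
    apply (sumR_eq_max (nbrs n adj i) f (f u)).
    - intros k Hk. apply in_nbrs in Hk. apply Hmax; tauto.
    - rewrite <- Hi, <- Hharm by exact Hin. reflexivity.
    - apply in_nbrs. auto. }
  assert (Hpath : forall i j, clos_refl_trans nat (edge_rel n adj) i j -> f i = f u -> f j = f u).
  { intros i j Hij. induction Hij; eauto. }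
  intros i j Hi Hj. rewrite (Hpath u i), (Hpath u j); auto.
Qed.

End Graph.

Lemma Qd_cases a D d y : Qd a D d y = a \/ Qd a D d y = a + D.
Proof. unfold Qd. destruct Rle_dec; auto. Qed.

Lemma Qd_low a D d y : y <= a + D - d -> Qd a D d y = a.
Proof. intros Hy. unfold Qd. destruct Rle_dec; [reflexivity|contradiction]. Qed.

Lemma Qd_high a D d y : a + D - d < y -> Qd a D d y = a + D.
Proof. intros Hy. unfold Qd. destruct Rle_dec; [lra|reflexivity]. Qed.

Lemma Qd_low_inv a D d y : 0 < D -> Qd a D d y = a -> y <= a + D - d.
Proof. unfold Qd. destruct Rle_dec; intros; [assumption|lra]. Qed.

Lemma Qd_high_inv a D d y : 0 < D -> Qd a D d y = a + D -> a + D - d < y.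
Proof. unfold Qd. destruct Rle_dec; intros; lra. Qed.

Lemma Qd_bounds a D d y : 0 < D -> a <= Qd a D d y <= a + D.
Proof. intros. destruct (Qd_cases a D d y) as [-> | ->]; lra. Qed.

Lemma Qd_sub_multiple a D d y y' : exists z, Qd a D d y - Qd a D d y' = D * IZR z.
Proof.
  destruct (Qd_cases a D d y) as [-> | ->], (Qd_cases a D d y') as [-> | ->];
    [exists 0%Z | exists (-1)%Z | exists 1%Z | exists 0%Z]; simpl; lra.
Qed.

Lemma projX_dist_low a D y B : 0 < D -> 0 <= B -> y - a <= B -> Rabs (a - projX a D y) <= B.
Proof. intros. unfold projX, Rmax, Rmin. repeat destruct Rle_dec; apply Rabs_le; lra. Qed.

Lemma projX_dist_high a D y B :
  0 < D -> 0 < B -> a + D - y < B -> Rabs (a + D - projX a D y) < B.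
Proof. intros. unfold projX, Rmax, Rmin. repeat destruct Rle_dec; apply Rabs_def1; lra. Qed.

Section Dynamics.
Variables (n : nat) (adj : nat -> nat -> bool) (a D d rho : R) (r : nat -> R).
Hypotheses (Hn : (2 <= n)%nat) (Hg : simple_graph n adj) (Hc : connected n adj)
  (HD : 0 < D) (Hd : 0 < d) (HdD : d < D) (Hrho : 0 < rho).

Notation Q := (Qd a D d).
Notation x := (bq_x n adj a D d rho r).
Notation al := (bq_alpha n adj a D d rho r).
Notation dg i := (INR (deg n adj i)).
Notation Nb i := (nbrs n adj i).
Notation s := (a + D - d).
Notation weight i := (1 + 2 * rho * dg i).
Notation qsum k i := (sumR (Nb i) (fun j => Q (x k j))).
Notation input k i := (rho * dg i * Q (x k i) + rho * qsum k i).

Lemma Q_bounds y : a <= Q y <= a + D.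
Proof. exact (Qd_bounds a D d y HD). Qed.

Lemma bq_x_succ k i : x (S k) i = (input k i - al k i + r i) / weight i.
Proof. unfold bq_x, bq_alpha. simpl. destruct (bq_state n adj a D d rho r k). reflexivity. Qed.

Lemma bq_alpha_succ k i : al (S k) i = al k i + rho * (dg i * Q (x (S k) i) - qsum (S k) i).
Proof. unfold bq_x, bq_alpha. simpl. destruct (bq_state n adj a D d rho r k). reflexivity. Qed.

Lemma weight_pos i : 0 < weight i.
Proof. pose proof (pos_INR (deg n adj i)). nra. Qed.

Lemma bq_x_succ_weighted k i : weight i * x (S k) i = input k i - al k i + r i.
Proof. rewrite bq_x_succ. field. pose proof (weight_pos i). lra. Qed.

Lemma qsum_ext k k' i :
  (forall j, (j < n)%nat -> Q (x k j) = Q (x k' j)) -> qsum k i = qsum k' i.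
Proof. intros H. apply sumR_ext_in. intros j Hj. apply in_nbrs in Hj. apply H; tauto. Qed.

Lemma qsum_bounds k i : dg i * a <= qsum k i <= dg i * (a + D).
Proof.
  rewrite <- !sumR_nbrs_const. split; apply sumR_le; intros; apply Q_bounds.
Qed.

Lemma input_bounds k i : 2 * rho * dg i * a <= input k i <= 2 * rho * dg i * (a + D).
Proof.
  assert (0 <= rho * dg i) by (pose proof (pos_INR (deg n adj i)); nra).
  pose proof (qsum_bounds k i). pose proof (Q_bounds (x k i)). nra.
Qed.

Lemma disagreement_sum k i :
  dg i * Q (x k i) - qsum k i = sumR (Nb i) (fun j => Q (x k i) - Q (x k j)).
Proof. rewrite sumR_minus, sumR_nbrs_const. reflexivity. Qed.

Lemma alpha_step_bounds k i : - (rho * dg i * D) <= al (S k) i - al k i <= rho * dg i * D.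
Proof.
  assert (Hdis : - (dg i * D) <= dg i * Q (x (S k) i) - qsum (S k) i <= dg i * D).
  { rewrite disagreement_sum.
    replace (- (dg i * D)) with (sumR (Nb i) (fun _ => - D)) by (rewrite sumR_nbrs_const; ring).
    rewrite <- sumR_nbrs_const.
    split; apply sumR_le; intros j _;
      pose proof (Q_bounds (x (S k) i)); pose proof (Q_bounds (x (S k) j)); lra. }
  rewrite bq_alpha_succ. nra.
Qed.

Lemma alpha_step_high k i : s < x (S k) i -> al k i <= al (S k) i.
Proof.
  intros Hx. rewrite bq_alpha_succ, disagreement_sum, (Qd_high a D d _ Hx).
  assert (0 <= sumR (Nb i) (fun j => a + D - Q (x (S k) j))).
  { rewrite <- (Rmult_0_r (dg i)), <- sumR_nbrs_const. apply sumR_le; intros j _.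
    pose proof (Q_bounds (x (S k) j)). lra. }
  nra.
Qed.

Lemma alpha_step_low k i : x (S k) i <= s -> al (S k) i <= al k i.
Proof.
  intros Hx. rewrite bq_alpha_succ, disagreement_sum, (Qd_low a D d _ Hx).
  assert (sumR (Nb i) (fun j => a - Q (x (S k) j)) <= 0).
  { rewrite <- (Rmult_0_r (dg i)), <- sumR_nbrs_const. apply sumR_le; intros j _.
    pose proof (Q_bounds (x (S k) j)). lra. }
  nra.
Qed.

Lemma alpha_multiple k i : exists z, al k i = rho * D * IZR z.
Proof.
  induction k as [|k [z1 E1]]; [exists 0%Z; unfold bq_alpha; simpl; lra|].
  destruct (sumR_multiples (Nb i) (fun j => Q (x (S k) i) - Q (x (S k) j)) D) as [z2 E2].
  { intros j _. apply Qd_sub_multiple. }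
  exists (z1 + z2)%Z. rewrite bq_alpha_succ, disagreement_sum, E1, E2, plus_IZR. ring.
Qed.

Lemma alpha_bounded i : exists M, forall k, Rabs (al k i) <= M.
Proof.
  set (c := rho * dg i * D).
  set (hi := 2 * rho * dg i * (a + D) + r i - weight i * s + c).
  set (lo := 2 * rho * dg i * a + r i - weight i * s - c).
  (* Above [hi - c] the next x_i is at most s, so alpha_i cannot increase; below [lo + c] it
     cannot decrease. *)
  assert (Hstep : forall k, Rmin (al k i) lo <= al (S k) i <= Rmax (al k i) hi).
  { intros k. pose proof (alpha_step_bounds k i) as Hb. fold c in Hb.
    pose proof (input_bounds k i). pose proof (bq_x_succ_weighted k i) as Ex.
    pose proof (weight_pos i). split.
    - destruct (Rlt_dec (al k i) (lo + c)) as [Hlt|Hge].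
      + assert (Hx : s < x (S k) i).
        { apply (Rmult_lt_reg_l (weight i)); [assumption|]. rewrite Ex. unfold lo in Hlt. lra. }
        pose proof (alpha_step_high k i Hx). pose proof (Rmin_l (al k i) lo). lra.
      + pose proof (Rmin_r (al k i) lo). lra.
    - destruct (Rle_dec (hi - c) (al k i)) as [Hle|Hlt].
      + assert (Hx : x (S k) i <= s).
        { apply (Rmult_le_reg_l (weight i)); [assumption|]. rewrite Ex. unfold hi in Hle. lra. }
        pose proof (alpha_step_low k i Hx). pose proof (Rmax_l (al k i) hi). lra.
      + pose proof (Rmax_r (al k i) hi). lra. }
  exists (Rabs lo + Rabs hi). intros k.
  pose proof (confined_of_steps (fun k => al k i) lo hi Hstep k) as Hk. simpl in Hk.
  replace (al 0%nat i) with 0 in Hk by reflexivity.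
  pose proof (Rabs_pos lo). pose proof (Rabs_pos hi).
  pose proof (Rle_abs hi). pose proof (Rle_abs (- lo)) as Hlo. rewrite Rabs_Ropp in Hlo.
  apply Rabs_le. revert Hk. unfold Rmin, Rmax. repeat destruct Rle_dec; lra.
Qed.

Lemma x_succ_determined k k' :
  (forall i, (i < n)%nat -> Q (x k i) = Q (x k' i) /\ al k i = al k' i) ->
  forall i, (i < n)%nat -> x (S k) i = x (S k') i.
Proof.
  intros H i Hi. destruct (H i Hi) as [EQ Eal].
  rewrite !bq_x_succ, EQ, Eal, (qsum_ext k k' i); [reflexivity|].
  intros j Hj. exact (proj1 (H j Hj)).
Qed.

Lemma eventually_periodic :
  exists k0 T, (1 <= k0)%nat /\ (1 <= T)%nat /\ periodic_from n adj a D d rho r k0 T.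
Proof.
  destruct (uniform_bound_below al n (fun i _ => alpha_bounded i)) as [M HM].
  destruct (bounded_multiples_finite (rho * D) M) as [Lal HLal]; [nra|].
  (* Encoding the state as a graph over the nodes puts it in a [list_power]. *)
  set (state := fun k => map (fun i => (i, (Q (x k i), al k i))) (nodes n)).
  assert (Hsame : forall k k', state k = state k' ->
            forall i, (i < n)%nat -> Q (x k i) = Q (x k' i) /\ al k i = al k' i).
  { intros k k' E i Hi. apply in_nodes in Hi.
    pose proof (ext_in_map E i Hi) as Ei. injection Ei as E1 E2. auto. }
  destruct (eventually_periodic_of_finite
              (list_power (nodes n) (list_prod [a; a + D] Lal)) state) as (k0 & T & HT & Hper).
  - intros k. apply in_list_power_graph. intros i Hi. apply in_nodes in Hi. apply in_prod.
    + destruct (Qd_cases a D d (x k i)) as [-> | ->]; simpl; auto.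
    + destruct (alpha_multiple k i) as [z Hz]. rewrite Hz. apply HLal. rewrite <- Hz. auto.
  - intros k k' E. pose proof (x_succ_determined k k' (Hsame k k' E)) as Hx.
    assert (Hq : forall j, (j < n)%nat -> Q (x (S k) j) = Q (x (S k') j))
      by (intros j Hj; rewrite (Hx j Hj); reflexivity).
    apply map_ext_in. intros i Hi. apply in_nodes in Hi.
    rewrite !bq_alpha_succ, (Hq i Hi), (qsum_ext (S k) (S k') i Hq), (proj2 (Hsame k k' E i Hi)).
    reflexivity.
  - exists (S k0), T. split; [lia|]. split; [exact HT|].
    intros k i Hk Hi. destruct k as [|k]; [lia|].
    replace (S k + T)%nat with (S (k + T)) by lia.
    apply x_succ_determined; [|exact Hi]. apply Hsame, Hper. lia.
Qed.

Lemma sum_alpha k : sumR (nodes n) (al k) = 0.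
Proof.
  induction k as [|k IH].
  - rewrite (sumR_ext_in _ _ (fun _ => 0)) by (intros; reflexivity). rewrite sumR_const. ring.
  - rewrite (sumR_ext_in _ _ (fun i => al k i + rho * (dg i * Q (x (S k) i) - qsum (S k) i)))
      by (intros; apply bq_alpha_succ).
    rewrite sumR_plus, sumR_scal, sumR_minus, sumR_nbrs_double_count, IH by exact Hg. ring.
Qed.

Lemma rbar_mul : INR n * rbar n r = sumR (nodes n) r.
Proof. unfold rbar. field. apply not_0_INR. lia. Qed.

Lemma mass_balance k :
  sumR (nodes n) (fun i => weight i * (x (S k) i - s))
  = 2 * rho * sumR (nodes n) (fun i => dg i * (Q (x k i) - s)) + INR n * (rbar n r - s).
Proof.
  rewrite (sumR_ext_in _ _ (fun i => rho * (dg i * Q (x k i)) + rho * qsum k i - al k i + r i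
                                     - (s + 2 * rho * s * dg i)))
    by (intros i _; rewrite Rmult_minus_distr_l, bq_x_succ_weighted; ring).
  rewrite (sumR_ext_in _ (fun i => dg i * (Q (x k i) - s)) (fun i => dg i * Q (x k i) - s * dg i))
    by (intros; ring).
  (* Freezing s keeps the rewrites below from splitting it. *)
  set (c := a + D - d).
  repeat rewrite ?sumR_plus, ?sumR_minus.
  rewrite !sumR_scal, sumR_const, (sumR_nbrs_double_count n adj Hg), sum_alpha.
  rewrite (Rmult_minus_distr_l (INR n)), rbar_mul.
  unfold nodes; rewrite length_seq. ring.
Qed.

Lemma x_upper_after_low u k i :
  (u < k)%nat -> x (S u) i <= s -> (forall t, (S u < t <= k)%nat -> s < x t i) ->
  weight i * (x (S k) i - s) <= 3 * (rho * dg i * D).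
Proof.
  intros Huk Hu Hhigh.
  assert (Hal : al u i - rho * dg i * D <= al k i).
  { apply (ge_after_single_drop (fun t => al t i)); [exact Huk| |].
    - pose proof (alpha_step_bounds u i). lra.
    - intros t Ht. apply alpha_step_high, Hhigh. lia. }
  pose proof (bq_x_succ_weighted k i). pose proof (bq_x_succ_weighted u i).
  pose proof (input_bounds k i). pose proof (input_bounds u i).
  assert (weight i * x (S u) i <= weight i * s)
    by (apply Rmult_le_compat_l; [left; apply weight_pos|exact Hu]).
  lra.
Qed.

Lemma x_lower_after_high u k i :
  (u < k)%nat -> s < x (S u) i -> (forall t, (S u < t <= k)%nat -> x t i <= s) ->
  - (3 * (rho * dg i * D)) <= weight i * (x (S k) i - s).
Proof.
  intros Huk Hu Hlow.
  assert (Hal : - al u i - rho * dg i * D <= - al k i).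
  { apply (ge_after_single_drop (fun t => - al t i)); [exact Huk| |].
    - pose proof (alpha_step_bounds u i). lra.
    - intros t Ht. apply Ropp_le_contravar, alpha_step_low, Hlow. lia. }
  pose proof (bq_x_succ_weighted k i). pose proof (bq_x_succ_weighted u i).
  pose proof (input_bounds k i). pose proof (input_bounds u i).
  assert (weight i * s <= weight i * x (S u) i)
    by (apply Rmult_le_compat_l; [left; apply weight_pos|left; exact Hu]).
  lra.
Qed.

Lemma x_near_threshold i k tL tH :
  (1 <= tL <= k)%nat -> (1 <= tH <= k)%nat -> x tL i <= s -> s < x tH i ->
  - (3 * (rho * dg i * D)) <= weight i * (x (S k) i - s) <= 3 * (rho * dg i * D).
Proof.
  intros HL HH HxL HxH. split.
  - destruct (last_occurrence (fun t => s < x t i) tH k) as (u & Hu & Hxu & Hafter);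
      [lia|exact HxH|].
    destruct u as [|u]; [lia|].
    apply (x_lower_after_high u); [lia|exact Hxu|].
    intros t Ht. apply Rnot_lt_le, Hafter. lia.
  - destruct (last_occurrence (fun t => x t i <= s) tL k) as (u & Hu & Hxu & Hafter);
      [lia|exact HxL|].
    destruct u as [|u]; [lia|].
    apply (x_upper_after_low u); [lia|exact Hxu|].
    intros t Ht. apply Rnot_le_lt, Hafter. lia.
Qed.

Lemma sumR_deg_scal c : sumR (nodes n) (fun i => c * dg i) = c * (2 * INR (num_edges n adj)).
Proof. rewrite sumR_scal, (sum_deg n adj Hg). reflexivity. Qed.

Lemma rbar_near_threshold k :
  (forall i, (i < n)%nat ->
     - (3 * (rho * dg i * D)) <= weight i * (x (S k) i - s) <= 3 * (rho * dg i * D)) ->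
  Rabs (rbar n r - s) < 6 * rho * INR n * D.
Proof.
  intros Hnear. pose proof (mass_balance k) as Hmb.
  pose proof (num_edges_le n adj Hg) as Hm.
  assert (Hx : - (3 * rho * D) * (2 * INR (num_edges n adj))
               <= sumR (nodes n) (fun i => weight i * (x (S k) i - s))
               <= 3 * rho * D * (2 * INR (num_edges n adj))).
  { rewrite <- !sumR_deg_scal. split; apply sumR_le; intros i Hi; apply in_nodes in Hi;
      specialize (Hnear i Hi); lra. }
  assert (HQ : - D * (2 * INR (num_edges n adj))
               <= sumR (nodes n) (fun i => dg i * (Q (x k i) - s))
               <= D * (2 * INR (num_edges n adj))).
  { rewrite <- !sumR_deg_scal. split; apply sumR_le; intros i _;
      pose proof (pos_INR (deg n adj i)); pose proof (Q_bounds (x k i)); nra. }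
  assert (Hn0 : 0 < INR n) by (apply lt_0_INR; lia).
  assert (0 < rho * D * (INR n * INR n)) by (apply Rmult_lt_0_compat; nra).
  set (m2 := 2 * INR (num_edges n adj)) in *.
  set (SQ := sumR (nodes n) (fun i => dg i * (Q (x k i) - s))) in *.
  assert (- (rho * D * m2) <= rho * SQ <= rho * D * m2) by (split; nra).
  assert (rho * D * m2 <= rho * D * (INR n * INR n)) by (apply Rmult_le_compat_l; nra).
  assert (Hb : Rabs (INR n * (rbar n r - s)) <= 5 * (rho * D) * (INR n * INR n)).
  { apply Rabs_le. lra. }
  rewrite Rabs_mult, Rabs_pos_eq in Hb by lra.
  apply (Rmult_lt_reg_l (INR n)); [exact Hn0|]. lra.
Qed.

Lemma accuracy_factor_ge_1 : 1 <= 1 + 4 * rho * INR (num_edges n adj) / INR n.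
Proof.
  assert (0 < INR n) by (apply lt_0_INR; lia). pose proof (pos_INR (num_edges n adj)).
  assert (0 <= 4 * rho * INR (num_edges n adj) / INR n)
    by (unfold Rdiv; apply Rmult_le_pos; [nra|left; apply Rinv_0_lt_compat; assumption]).
  lra.
Qed.

Lemma rbar_upper_of_low_consensus k :
  (forall i, (i < n)%nat -> Q (x k i) = a /\ Q (x (S k) i) = a) ->
  rbar n r - a <= (1 + 4 * rho * INR (num_edges n adj) / INR n) * (D - d).
Proof.
  intros Hcons. pose proof (mass_balance k) as Hmb.
  assert (Hx : sumR (nodes n) (fun i => weight i * (x (S k) i - s)) <= 0).
  { rewrite <- (Rmult_0_r (INR (length (nodes n)))), <- sumR_const.
    apply sumR_le; intros i Hi. apply in_nodes in Hi.
    pose proof (Qd_low_inv a D d _ HD (proj2 (Hcons i Hi))). pose proof (weight_pos i). nra. }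
  assert (HQ : sumR (nodes n) (fun i => dg i * (Q (x k i) - s))
               = - (D - d) * (2 * INR (num_edges n adj))).
  { rewrite <- sumR_deg_scal. apply sumR_ext_in; intros i Hi. apply in_nodes in Hi.
    rewrite (proj1 (Hcons i Hi)). ring. }
  assert (Hn0 : 0 < INR n) by (apply lt_0_INR; lia).
  apply (Rmult_le_reg_l (INR n)); [exact Hn0|].
  replace (INR n * ((1 + 4 * rho * INR (num_edges n adj) / INR n) * (D - d)))
    with (INR n * (D - d) + 4 * rho * INR (num_edges n adj) * (D - d)) by (field; lra).
  rewrite HQ in Hmb. lra.
Qed.

Lemma rbar_lower_of_high_consensus k :
  (forall i, (i < n)%nat -> Q (x k i) = a + D /\ Q (x (S k) i) = a + D) ->
  a + D - rbar n r < (1 + 4 * rho * INR (num_edges n adj) / INR n) * d.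
Proof.
  intros Hcons. pose proof (mass_balance k) as Hmb.
  assert (Hx : 0 < sumR (nodes n) (fun i => weight i * (x (S k) i - s))).
  { rewrite <- (Rmult_0_r (INR (length (nodes n)))), <- sumR_const.
    apply sumR_lt; [unfold nodes; destruct n; [lia|discriminate]|].
    intros i Hi. apply in_nodes in Hi.
    pose proof (Qd_high_inv a D d _ HD (proj2 (Hcons i Hi))). pose proof (weight_pos i). nra. }
  assert (HQ : sumR (nodes n) (fun i => dg i * (Q (x k i) - s)) = d * (2 * INR (num_edges n adj))).
  { rewrite <- sumR_deg_scal. apply sumR_ext_in; intros i Hi. apply in_nodes in Hi.
    rewrite (proj1 (Hcons i Hi)). ring. }
  assert (Hn0 : 0 < INR n) by (apply lt_0_INR; lia).
  apply (Rmult_lt_reg_l (INR n)); [exact Hn0|].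
  replace (INR n * ((1 + 4 * rho * INR (num_edges n adj) / INR n) * d))
    with (INR n * d + 4 * rho * INR (num_edges n adj) * d) by (field; lra).
  rewrite HQ in Hmb. lra.
Qed.

Definition quantized_consensus_from (k0 : nat) (c : R) : Prop :=
  forall k i, (k0 <= k)%nat -> (i < n)%nat -> Q (x k i) = c.

Lemma converges_of_consensus k0 c :
  quantized_consensus_from k0 c -> converges_alt n adj a D d rho r k0.
Proof.
  intros Hcons. pose proof accuracy_factor_ge_1.
  exists c. split; [|split; [exact Hcons|split]].
  - rewrite <- (Hcons k0 0%nat) by lia. apply Qd_cases.
  - intros ->. apply projX_dist_low; [exact HD|nra|].
    apply (rbar_upper_of_low_consensus k0). intros i Hi. split; apply Hcons; lia.
  - intros ->. apply projX_dist_high; [exact HD|nra|].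
    apply (rbar_lower_of_high_consensus k0). intros i Hi. split; apply Hcons; lia.
Qed.

Lemma x_stationary_of_consensus k0 c :
  quantized_consensus_from k0 c ->
  forall k i, (k0 <= k)%nat -> (i < n)%nat -> x (S (S k)) i = x (S k) i.
Proof.
  intros Hcons k i Hk Hi. apply x_succ_determined; [|exact Hi]. intros j Hj. split.
  - rewrite (Hcons (S k) j), (Hcons k j) by lia. reflexivity.
  - rewrite bq_alpha_succ, (Hcons (S k) j) by lia.
    rewrite (sumR_ext_in _ _ (fun _ => c)); [rewrite sumR_nbrs_const; ring|].
    intros l Hl. apply in_nbrs in Hl. apply Hcons; [lia|tauto].
Qed.

Section Periodic.
Variables k0 p : nat.
Hypotheses (Hp : (1 <= p)%nat) (Hper : periodic_from n adj a D d rho r k0 p).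

Lemma alpha_periodic k i : (k0 <= k)%nat -> (i < n)%nat -> al (k + p) i = al k i.
Proof.
  intros Hk Hi.
  assert (HQ : forall j, (j < n)%nat -> Q (x (k + p) j) = Q (x k j))
    by (intros j Hj; rewrite Hper; auto).
  pose proof (bq_x_succ_weighted (k + p) i) as E1. pose proof (bq_x_succ_weighted k i) as E2.
  rewrite (HQ i Hi), (qsum_ext (k + p) k i HQ) in E1.
  replace (S (k + p)) with (S k + p)%nat in E1 by lia.
  rewrite (Hper (S k) i) in E1 by lia. lra.
Qed.

Definition window k i := sumR (seq 0 p) (fun m => Q (x (k + m) i)).

Lemma window_succ k i : (k0 <= k)%nat -> (i < n)%nat -> window (S k) i = window k i.
Proof.
  intros Hk Hi. unfold window.
  pose proof (sumR_telescope (fun m => Q (x (k + m) i)) p) as T. cbn beta in T.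
  rewrite sumR_minus, Nat.add_0_r, (Hper k i Hk Hi) in T.
  rewrite <- (sumR_ext_in _ (fun m => Q (x (k + S m) i))); [lra|].
  intros m _. rewrite Nat.add_succ_r. reflexivity.
Qed.

Lemma window_stable k i : (k0 <= k)%nat -> (i < n)%nat -> window k i = window k0 i.
Proof.
  intros Hk Hi. induction Hk as [|k Hk IH]; [reflexivity|].
  rewrite window_succ; assumption.
Qed.

Lemma window_harmonic k i :
  (k0 <= k)%nat -> (i < n)%nat -> dg i * window k i = sumR (Nb i) (window k).
Proof.
  intros Hk Hi.
  pose proof (sumR_telescope (fun m => al (k + m) i) p) as T. cbn beta in T.
  rewrite Nat.add_0_r, (alpha_periodic k i Hk Hi), Rminus_diag in T.
  rewrite (sumR_ext_in _ _ (fun m => rho * (dg i * Q (x (S (k + m)) i) - qsum (S (k + m)) i))) in T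
    by (intros m _; rewrite Nat.add_succ_r, bq_alpha_succ; ring).
  rewrite sumR_scal, sumR_minus, sumR_scal, sumR_exchange in T.
  change (sumR (seq 0 p) (fun m => Q (x (S (k + m)) i))) with (window (S k) i) in T.
  rewrite (window_succ k i Hk Hi) in T.
  rewrite (sumR_ext_in (Nb i) _ (window k)) in T.
  - destruct (Rmult_integral _ _ T); lra.
  - intros j Hj. apply in_nbrs in Hj. apply window_succ; tauto.
Qed.

Lemma window_uniform k i j :
  (k0 <= k)%nat -> (i < n)%nat -> (j < n)%nat -> window k i = window k j.
Proof.
  intros Hk. apply (harmonic_const n adj Hg Hc (window k)); [lia|].
  intros l Hl. apply window_harmonic; assumption.
Qed.

Lemma window_of_constant k i c :
  (forall m, (m < p)%nat -> Q (x (k + m) i) = c) -> window k i = INR p * c.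
Proof.
  intros H. unfold window.
  rewrite (sumR_ext_in _ _ (fun _ => c)), sumR_const, length_seq; [reflexivity|].
  intros m Hm. apply in_seq in Hm. apply H. lia.
Qed.

Lemma consensus_of_extreme_window c i :
  (c = a \/ c = a + D) -> (i < n)%nat -> window k0 i = INR p * c ->
  quantized_consensus_from k0 c.
Proof.
  intros Hext Hi Hw k j Hk Hj.
  assert (Hwj : sumR (seq 0 p) (fun m => Q (x (k + m) j)) = INR (length (seq 0 p)) * c).
  { rewrite length_seq. change (window k j = INR p * c).
    rewrite window_stable, (window_uniform k0 j i); auto. }
  assert (H0 : In 0%nat (seq 0 p)) by (apply in_seq; lia).
  rewrite <- (Nat.add_0_r k).
  destruct Hext as [-> | ->].
  - exact (sumR_eq_min _ (fun m => Q (x (k + m) j)) a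
             (fun m _ => proj1 (Q_bounds _)) Hwj 0%nat H0).
  - exact (sumR_eq_max _ (fun m => Q (x (k + m) j)) (a + D)
             (fun m _ => proj2 (Q_bounds _)) Hwj 0%nat H0).
Qed.

Lemma period_one_of_consensus c :
  quantized_consensus_from k0 c -> periodic_from n adj a D d rho r k0 1.
Proof.
  intros Hcons k i Hk Hi. rewrite Nat.add_1_r.
  destruct (Nat.eq_dec k k0) as [->|Hne].
  - assert (Hconst : forall t, x (S (k0 + t)) i = x (S k0) i).
    { induction t as [|t IH]; [rewrite Nat.add_0_r; reflexivity|].
      rewrite Nat.add_succ_r, <- IH. apply (x_stationary_of_consensus k0 c); auto; lia. }
    rewrite <- (Hper k0 i) by lia. replace (k0 + p)%nat with (S (k0 + (p - 1))) by lia.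
    rewrite Hconst. reflexivity.
  - destruct k as [|k]; [lia|]. apply (x_stationary_of_consensus k0 c); auto; lia.
Qed.

Lemma visits_both_sides i :
  (forall c, ~ quantized_consensus_from k0 c) -> (i < n)%nat ->
  exists tL tH, (k0 <= tL < k0 + p)%nat /\ (k0 <= tH < k0 + p)%nat /\ x tL i <= s /\ s < x tH i.
Proof.
  intros Hnc Hi.
  assert (HL : exists tL, (k0 <= tL < k0 + p)%nat /\ x tL i <= s).
  { apply NNPP. intros Hno. apply (Hnc (a + D)), (consensus_of_extreme_window (a + D) i);
      [right; reflexivity|exact Hi|].
    apply window_of_constant. intros m Hm. apply Qd_high, Rnot_le_lt. intros Hle.
    apply Hno. exists (k0 + m)%nat. split; [lia|exact Hle]. }
  assert (HH : exists tH, (k0 <= tH < k0 + p)%nat /\ s < x tH i).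
  { apply NNPP. intros Hno. apply (Hnc a), (consensus_of_extreme_window a i);
      [left; reflexivity|exact Hi|].
    apply window_of_constant. intros m Hm. apply Qd_low, Rnot_lt_le. intros Hlt.
    apply Hno. exists (k0 + m)%nat. split; [lia|exact Hlt]. }
  destruct HL as (tL & HtL & HxL), HH as (tH & HtH & HxH). exists tL, tH. auto.
Qed.

Lemma cycles_of_no_consensus :
  (1 <= k0)%nat ->
  (forall T', (1 <= T')%nat -> (T' < p)%nat -> ~ periodic_from n adj a D d rho r k0 T') ->
  (forall c, ~ quantized_consensus_from k0 c) ->
  cycles_alt n adj a D d rho r k0.
Proof.
  intros Hk0 Hmin Hnc.
  assert (Hp2 : (2 <= p)%nat).
  { destruct (Nat.eq_dec p 1) as [Hp1|]; [|lia]. exfalso.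
    apply (Hnc (Q (x k0 0%nat))), (consensus_of_extreme_window _ 0%nat);
      [apply Qd_cases|lia|].
    apply window_of_constant. intros m Hm. replace m with 0%nat by lia.
    rewrite Nat.add_0_r. reflexivity. }
  exists p. split; [exact Hp2|]. split; [exact Hper|]. split; [exact Hmin|]. split.
  - intros k i j Hk Hi Hj. exact (window_uniform k i j Hk Hi Hj).
  - apply (rbar_near_threshold (k0 + p)). intros i Hi.
    destruct (visits_both_sides i Hnc Hi) as (tL & tH & HL & HH & HxL & HxH).
    apply (x_near_threshold i (k0 + p) tL tH); auto; lia.
Qed.

End Periodic.
End Dynamics.

Theorem theorem2 (n : nat) (adj : nat -> nat -> bool)
  (a Delta delta rho : R) (r : nat -> R) :
  (2 <= n)%nat ->
  simple_graph n adj ->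
  connected n adj ->
  0 < Delta ->
  0 < delta -> delta < Delta ->
  0 < rho ->
  exists k0 : nat,
    (converges_alt n adj a Delta delta rho r k0 /\ ~ cycles_alt n adj a Delta delta rho r k0) \/
    (~ converges_alt n adj a Delta delta rho r k0 /\ cycles_alt n adj a Delta delta rho r k0).
Proof.
  intros Hn Hg Hc HD Hd HdD Hrho.
  destruct (eventually_periodic n adj a Delta delta rho r Hn HD Hd HdD Hrho)
    as (k0 & T & Hk0 & HT & HperT).
  destruct (dec_inh_nat_subset_has_unique_least_element
              (fun p => (1 <= p)%nat /\ periodic_from n adj a Delta delta rho r k0 p))
    as (p & [[Hp Hper] Hleast] & _); [intros; apply classic|eauto|].
  exists k0.
  destruct (classic (exists c, quantized_consensus_from n adj a Delta delta rho r k0 c))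
    as [[c Hcons]|Hnc].
  - left. split.
    + eapply converges_of_consensus; eassumption.
    + intros (T' & HT' & _ & Hmin & _). apply (Hmin 1%nat); [lia|lia|].
      eapply period_one_of_consensus; eassumption.
  - right. split.
    + intros (xQ & _ & HxQ & _). apply Hnc. exists xQ. exact HxQ.
    + eapply cycles_of_no_consensus; try eassumption.
      * intros T' HT1 HT2 HperT'. specialize (Hleast T' (conj HT1 HperT')). lia.
      * intros c Hcons. apply Hnc. exists c. exact Hcons.
Qed.
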